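(* In the colored-tree setting below, for every color $c\in C$ the map $f_c:V\to T_c$ satisfies $\mathcal L(f_c(v),f_c(v'))\le2|vv'|$ for all $v,v'\in V$.
   Context: Let $(Z,d)$ be a bounded metric space with at least two points. Hyperbolic approximation with parameter $r\in(0,1/6]$: $k_0$ is the largest integer with $\operatorname{diam}Z<r^{k_0}$; for each integer $k\ge k_0$, $V_k\subset Z$ is a maximal $r^k$-separated subset; vertex set $V=\bigsqcup_{k\ge k_0}V_k$ (disjoint union) with level $\ell(v)=k$ for $v\in V_k$, open ball $B(v)=\{z:d(z,v)<2r^k\}$, closure $\overline B(v)$; edges join equal-level vertices with $\overline B(v)\cap\overline B(v')\ne\emptyset$ (horizontal) and vertices on adjacent levels whose higher-level ball is contained in the lower-level ball (radial); $|vv'|$ is the path metric with unit edges; the unique vertex of $V_{k_0}$ is the root. Colored-tree setting: assume $\operatorname{cdim}Z=n<\infty$, $r<\min\{\operatorname{diam}Z,1/\operatorname{diam}Z\}$ (so $k_0\in\{0,-1\}$), and $(\mathcal U_j)_{j\ge0}$ is a sequence of open coverings of $Z$, each $\mathcal U_j=\bigcup_{c\in C}\mathcal U_j^c$ with $|C|=n+1$ and each $\mathcal U_j^c$ consisting of pairwise disjoint open sets, such that: (1) $\mathcal U_0^c=\{Z\}$ for all $c$ and $\sup_{U\in\mathcal U_j}\operatorname{diam}U<r^j$ for $j\ge1$; (2) for every $v\in V_{j+1}$, $j\ge0$, some $U\in\mathcal U_j$ contains $B(v)$; (3) for every $c$ and different $U\in\mathcal U_j^c$, $U'\in\mathcal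 U_{j'}^c$ with $j'\le j$, the set $B(U)=\bigcup\{B(v):v\in V_{j+1},B(v)\cap U\ne\emptyset\}$ satisfies $B(U)\subset U'$ or $B(U)\cap U'=\emptyset$. For $c\in C$, $T_c$ is the tree with vertex set $\bigsqcup_{j\ge0}\mathcal U_j^c$ (an element of $\mathcal U_j^c$ is a vertex of level $j$; the element $Z\in\mathcal U_0^c$ is the root $v_c$); a vertex $U'$ of level $j'$ is an ancestor of a vertex $U$ of level $j$ if $j'<j$ and $U\subset U'$; $U$ and $U'$ are joined by an edge iff one is an ancestor of the other and its level is maximal among the levels of ancestors of the other. $\mathcal L$ is the path metric on $T_c$ with unit edges; $T_{c,i}=\mathcal U_i^c$. The map $f_c:V\to T_c$ sends the root of $X$ to $v_c$ and $v\in V_j$, $j>k_0$, to the element $U\in\mathcal U_{j'}^c$ with $B(v)\subset U$ and $j'\le\max\{j-1,0\}$ maximal with this property (well-defined by (3)). *)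

From Stdlib Require Import Reals ZArith List.
Open Scope R_scope.

Section Metric.
Context {M : Type} (d : M -> M -> R).

Definition is_metric : Prop :=
  (forall x y, 0 <= d x y) /\ (forall x y, d x y = 0 <-> x = y) /\
  (forall x y, d x y = d y x) /\ (forall x y z, d x z <= d x y + d y z).

(* D = diam M = sup of all distances (its existence encodes boundedness) *)
Definition is_diam (D : R) : Prop := is_lub (fun t => exists x y, t = d x y) D.

Definition subset (A B : M -> Prop) : Prop := forall x, A x -> B x.

Definition oball (x : M) (rho : R) : M -> Prop := fun z => d z x < rho.

Definition closure (A : M -> Prop) : M -> Prop :=
  fun z => forall eps, 0 < eps -> exists a, A a /\ d z a < eps.

Definition is_open (U : M -> Prop) : Prop :=
  forall x, U x -> exists eps, 0 < eps /\ forall y, d x y < eps -> U y.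

Definition separated (s : R) (A : M -> Prop) : Prop :=
  forall a b, A a -> A b -> a <> b -> s <= d a b.

Definition max_separated (s : R) (A : M -> Prop) : Prop :=
  separated s A /\ forall B, subset A B -> separated s B -> subset B A.

(* Capacity dimension.  [cdim_prop m]: there is delta > 0 such that for every
   sufficiently small t > 0 there is an open covering of M with mesh <= t,
   multiplicity <= m+1 and Lebesgue number >= delta * t. *)
Definition cdim_prop (m : nat) : Prop :=
  exists delta, 0 < delta /\ exists t0, 0 < t0 /\
  forall t, 0 < t -> t <= t0 ->
  exists F : (M -> Prop) -> Prop,
    (forall U, F U -> is_open U) /\
    (forall x, exists U, F U /\ U x) /\
    (forall U x y, F U -> U x -> U y -> d x y <= t) /\
    (forall x (l : list (M -> Prop)), NoDup l ->
        (forall U, In U l -> F U /\ U x) -> (length l <= S m)%nat) /\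
    (forall x s, s < delta * t -> exists U, F U /\ subset (oball x s) U).

Definition cdim_eq (n : nat) : Prop :=
  cdim_prop n /\ forall m, cdim_prop m -> (n <= m)%nat.

End Metric.

Section HypApprox.
Context {M : Type} (d : M -> M -> R) (Dm r : R) (k0 : Z) (Vs : Z -> M -> Prop).

Definition hyp_approx : Prop :=
  0 < r /\ r <= 1/6 /\
  Dm < powerRZ r k0 /\ (forall k, Dm < powerRZ r k -> (k <= k0)%Z) /\
  (forall k, (k0 <= k)%Z -> max_separated d (powerRZ r k) (Vs k)).

(* vertices of X: pairs (k, v) with k >= k0, v in V_k (disjoint union) *)
Definition xvertex (p : Z * M) : Prop := (k0 <= fst p)%Z /\ Vs (fst p) (snd p).

Definition Bv (p : Z * M) : M -> Prop := oball d (snd p) (2 * powerRZ r (fst p)).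

Definition xedge (p q : Z * M) : Prop :=
  xvertex p /\ xvertex q /\
  ((fst p = fst q /\ p <> q /\
      exists z, closure d (Bv p) z /\ closure d (Bv q) z) \/
   (fst q = fst p + 1 /\ subset (Bv q) (Bv p))%Z \/
   (fst p = fst q + 1 /\ subset (Bv p) (Bv q))%Z).

End HypApprox.

Inductive walk {V : Type} (E : V -> V -> Prop) : nat -> V -> V -> Prop :=
| walk0 : forall u, walk E 0 u u
| walkS : forall n u w x, E u w -> walk E n w x -> walk E (S n) u x.

Definition path_dist {V : Type} (E : V -> V -> Prop) (u w : V) (m : nat) : Prop :=
  walk E m u w /\ forall m', walk E m' u w -> (m <= m')%nat.

Section Colored.
Context {M : Type} (d : M -> M -> R) (r : R) (k0 : Z) (Vs : Z -> M -> Prop)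
        {C : Type} (cov : nat -> C -> (M -> Prop) -> Prop).
(* cov j c U  <->  U is an element of U_j^c *)

Definition vlev (j : nat) : Z := (Z.of_nat j + 1)%Z.

Definition BU (j : nat) (U : M -> Prop) : M -> Prop :=
  fun z => exists v, Vs (vlev j) v /\ (exists y, Bv d r (vlev j, v) y /\ U y) /\
                     Bv d r (vlev j, v) z.

Definition colored_cov : Prop :=
  (forall j c U, cov j c U -> is_open d U) /\
  (forall j x, exists c U, cov j c U /\ U x) /\
  (forall j c U U', cov j c U -> cov j c U' -> U <> U' -> forall x, ~ (U x /\ U' x)) /\
  (forall c U, cov 0%nat c U <-> U = (fun _ => True)) /\
  (forall j, (1 <= j)%nat -> exists s, s < r ^ j /\
       forall c U x y, cov j c U -> U x -> U y -> d x y <= s) /\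
  (forall j v, Vs (vlev j) v -> exists c U, cov j c U /\ subset (Bv d r (vlev j, v)) U) /\
  (forall c j j' U U', cov j c U -> cov j' c U' -> (j' <= j)%nat -> (j, U) <> (j', U') ->
       subset (BU j U) U' \/ (forall x, ~ (BU j U x /\ U' x))).

Definition tvertex (c : C) (a : nat * (M -> Prop)) : Prop := cov (fst a) c (snd a).

Definition ancestor (c : C) (a' a : nat * (M -> Prop)) : Prop :=
  tvertex c a' /\ tvertex c a /\ (fst a' < fst a)%nat /\ subset (snd a) (snd a').

Definition tparent (c : C) (a' a : nat * (M -> Prop)) : Prop :=
  ancestor c a' a /\ forall b, ancestor c b a -> (fst b <= fst a')%nat.

Definition tedge (c : C) (a b : nat * (M -> Prop)) : Prop :=
  tparent c a b \/ tparent c b a.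

(* graph of the map f_c : V -> T_c *)
Definition fc_rel (c : C) (p : Z * M) (a : nat * (M -> Prop)) : Prop :=
  xvertex k0 Vs p /\
  ((fst p = k0 /\ a = (0%nat, fun _ => True)) \/
   ((k0 < fst p)%Z /\ cov (fst a) c (snd a) /\ subset (Bv d r p) (snd a) /\
    (Z.of_nat (fst a) <= Z.max (fst p - 1) 0)%Z /\
    (forall j U, cov j c U -> subset (Bv d r p) U ->
        (Z.of_nat j <= Z.max (fst p - 1) 0)%Z -> (j <= fst a)%nat))).

End Colored.

(* It suffices that f_c moves the two ends of each edge vv' of X to tree distance at most 2.
   Condition (3) makes every coarser set that meets the enlargement B(U) of U an ancestor of U,
   and then that ancestor contains all of B(U).  Let U = f_c(v) and U' = f_c(v') have levels
   j <= j'.  Then U is U' or an ancestor of U'; if the parent P of U' is finer than U, a ball of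
   level (level P)+1 around the edge meets P and swallows B(v), so by the maximality of j the
   set U is the parent of P.  When j = j' and U <> U', the enlargements of U and U' meet, and the
   two sets share their parent. *)

From Stdlib Require Import Reals ZArith List Lra Lia Classical.
Open Scope R_scope.

Section Powers.
Variable r : R.
Hypothesis r_pos : 0 < r.

Lemma powerRZ_succ k : powerRZ r (k + 1) = powerRZ r k * r.
Proof. rewrite powerRZ_add by lra. now rewrite powerRZ_1. Qed.

Lemma powerRZ_antimono a b : r <= 1 -> (a <= b)%Z -> powerRZ r b <= powerRZ r a.
Proof.
  intros r_le1 Hab. replace b with (a + Z.of_nat (Z.to_nat (b - a)))%Z by lia.
  induction (Z.to_nat (b - a)) as [|n IH].
  - rewrite Z.add_0_r. lra.
  - replace (a + Z.of_nat (S n))%Z with (a + Z.of_nat n + 1)%Z by lia.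
    rewrite powerRZ_succ. pose proof (powerRZ_lt r (a + Z.of_nat n) r_pos). nra.
Qed.

Lemma six_powerRZ_le i k : r <= 1/6 -> (i + 2 <= k)%Z -> 6 * powerRZ r k <= powerRZ r (i + 1).
Proof.
  intros r_le Hik. pose proof (powerRZ_antimono (i + 1 + 1) k ltac:(lra) ltac:(lia)) as H.
  rewrite powerRZ_succ in H. pose proof (powerRZ_lt r (i + 1) r_pos). nra.
Qed.
End Powers.

Lemma nat_pred_has_max (Q : nat -> Prop) B a :
  (forall n, Q n -> (n <= B)%nat) -> Q a -> exists m, Q m /\ forall n, Q n -> (n <= m)%nat.
Proof.
  revert Q a. induction B as [|B IH]; intros Q a HB Ha.
  - exists a; split; auto. intros n Hn. pose proof (HB n Hn). pose proof (HB a Ha). lia.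
  - destruct (classic (Q (S B))) as [HS|HS].
    + exists (S B); split; auto.
    + apply (IH Q a); auto. intros n Hn. pose proof (HB n Hn).
      destruct (Nat.eq_dec n (S B)); [subst; contradiction | lia].
Qed.

Section Walks.
Context {V : Type} (E : V -> V -> Prop).

Lemma walk_cat n m a b x : walk E n a b -> walk E m b x -> walk E (n + m) a x.
Proof. induction 1; intros; simpl; auto. econstructor; eauto. Qed.

Lemma walk_rev : (forall a b, E a b -> E b a) -> forall n a b, walk E n a b -> walk E n b a.
Proof.
  intros E_sym. induction 1 as [|n u w x Huw _ IH]; [constructor|].
  replace (S n) with (n + 1)%nat by lia. apply (walk_cat _ _ _ w); auto.
  econstructor; eauto. constructor.
Qed.

Definition within2 (a b : V) : Prop := exists l, (l <= 2)%nat /\ walk E l a b.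

Lemma within2_refl a : within2 a a.
Proof. exists 0%nat; split; [lia | constructor]. Qed.

Lemma within2_sym a b : (forall x y, E x y -> E y x) -> within2 a b -> within2 b a.
Proof. intros E_sym [l [Hl Hw]]. exists l; split; auto. now apply walk_rev. Qed.

Lemma within2_edge a b : E a b -> within2 a b.
Proof. intro H. exists 1%nat; split; [lia|]. econstructor; eauto. constructor. Qed.

Lemma within2_edge2 a x b : E a x -> E x b -> within2 a b.
Proof.
  intros H1 H2. exists 2%nat; split; [lia|].
  econstructor; eauto. econstructor; eauto. constructor.
Qed.
End Walks.

Lemma tedge_sym {M C : Type} (cov : nat -> C -> (M -> Prop) -> Prop) c a b :
  tedge cov c a b -> tedge cov c b a.
Proof. intros [H|H]; [right|left]; exact H. Qed.

Lemma max_separated_net {M : Type} (d : M -> M -> R) s A :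
  (forall x, d x x = 0) -> (forall x y, d x y = d y x) -> 0 < s ->
  max_separated d s A -> forall z, exists y, A y /\ d z y < s.
Proof.
  intros d_refl d_sym s_pos [A_sep A_max] z.
  destruct (classic (exists y, A y /\ d z y < s)) as [H|H]; auto.
  assert (Az : A z).
  { apply (A_max (fun x => A x \/ x = z)); [intros x Hx; now left | | now right].
    intros x y [Hx|Hx] [Hy|Hy] Hxy; try subst.
    - now apply A_sep.
    - apply Rnot_lt_le; intro Hl; apply H; exists x; split; auto. now rewrite d_sym.
    - apply Rnot_lt_le; intro Hl; apply H; exists y; split; auto.
    - contradiction. }
  exfalso. apply H. exists z. split; auto. now rewrite d_refl.
Qed.

Lemma hyp_approx_k0_nonpos {M : Type} (d : M -> M -> R) Dm r k0 Vs :
  hyp_approx d Dm r k0 Vs -> r < Dm -> (k0 <= 0)%Z.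
Proof.
  intros [r_pos [r_small [Dm_lt _]]] r_lt.
  destruct (Z_le_gt_dec k0 0) as [H|H]; auto. exfalso.
  pose proof (powerRZ_antimono r r_pos 1 k0 ltac:(lra) ltac:(lia)) as Hle.
  rewrite powerRZ_1 in Hle. lra.
Qed.

Section ColoredTree.
Variables (M : Type) (d : M -> M -> R) (r : R) (k0 : Z) (Vs : Z -> M -> Prop)
  (C : Type) (cov : nat -> C -> (M -> Prop) -> Prop) (c : C).
Hypothesis d_refl : forall x, d x x = 0.
Hypothesis d_sym : forall x y, d x y = d y x.
Hypothesis d_tri : forall x y z, d x z <= d x y + d y z.
Hypothesis r_pos : 0 < r.
Hypothesis r_small : r <= 1/6.
Hypothesis k0_nonpos : (k0 <= 0)%Z.
Hypothesis Vs_net : forall k, (0 <= k)%Z -> forall z, exists y, Vs k y /\ d z y < powerRZ r k.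
Hypothesis cov_disj : forall j U U', cov j c U -> cov j c U' -> U <> U' -> forall x, ~ (U x /\ U' x).
Hypothesis cov_root : forall U, cov 0%nat c U <-> U = (fun _ => True).
Hypothesis cov_nested : forall j j' U U', cov j c U -> cov j' c U' -> (j' <= j)%nat ->
  (j, U) <> (j', U') -> subset (BU d r Vs j U) U' \/ (forall x, ~ (BU d r Vs j U x /\ U' x)).

Notation B := (Bv d r).
Notation BU := (BU d r Vs).
Notation anc := (ancestor cov c).
Notation parent := (tparent cov c).
Notation near := (within2 (tedge cov c)).
Notation fc := (fc_rel d r k0 Vs cov c).

Let pw_pos k : 0 < powerRZ r k := powerRZ_lt r k r_pos.

Lemma center_in_ball k v : B (k, v) v.
Proof. unfold Bv, oball; simpl. rewrite d_refl. pose proof (pw_pos k). lra. Qed.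

Lemma ball_sub_BU i X y t : cov i c X -> Vs (vlev i) y -> B (vlev i, y) t -> X t ->
  subset (B (vlev i, y)) (BU i X).
Proof. intros HX Hy Ht HXt z Hz. exists y. repeat split; auto. exists t; auto. Qed.

Lemma cov_sub_BU j X : cov j c X -> subset X (BU j X).
Proof.
  intros HX z Hz. destruct (Vs_net (vlev j) ltac:(unfold vlev; lia) z) as [y [Hy Hzy]].
  assert (B (vlev j, y) z) by (unfold Bv, oball; simpl; pose proof (pw_pos (vlev j)); lra).
  now apply (ball_sub_BU j X y z).
Qed.

Lemma cov_eq_of_meet j U U' t : cov j c U -> cov j c U' -> U t -> U' t -> U = U'.
Proof.
  intros HU HU' Ht Ht'. apply NNPP. intro E. now apply (cov_disj j U U' HU HU' E t).
Qed.

Lemma cov_eq_of_BU_meet j X A t : cov j c X -> cov j c A -> BU j X t -> A t -> X = A.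
Proof.
  intros HX HA Ht HAt. apply NNPP. intro E.
  destruct (cov_nested j j X A HX HA (le_n _)) as [H|H].
  - intro F. now injection F.
  - destruct Ht as [v [_ [[y [_ Hy]] _]]].
    apply (cov_disj j X A HX HA E y); split; auto. now apply H, cov_sub_BU.
  - now apply (H t).
Qed.

Lemma BU_sub_of_meet i j A X t : cov i c A -> cov j c X -> (i < j)%nat ->
  BU j X t -> A t -> subset (BU j X) A.
Proof.
  intros HA HX Hij Ht HAt.
  destruct (cov_nested j i X A HX HA ltac:(lia)) as [H|H]; auto.
  - intro E. injection E. lia.
  - now destruct (H t).
Qed.

Lemma ancestor_of_meet i j A X t : cov i c A -> cov j c X -> (i < j)%nat ->
  BU j X t -> A t -> anc (i, A) (j, X).
Proof.
  intros HA HX Hij Ht HAt. unfold ancestor, tvertex; simpl. repeat split; auto.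
  intros x Hx. apply (BU_sub_of_meet i j A X t); auto. now apply cov_sub_BU.
Qed.

Lemma ancestor_BU_sub l A i X : anc (l, A) (i, X) -> subset (BU i X) A.
Proof.
  intros [HA [HX [Hli HXA]]] z Hz; simpl in *.
  pose proof Hz as [v [Hv [[y [Hvy Hy]] _]]].
  apply (BU_sub_of_meet l i A X y); auto.
  now apply (ball_sub_BU i X v y).
Qed.

Lemma root_ancestor j U : cov j c U -> (0 < j)%nat -> anc (0%nat, fun _ => True) (j, U).
Proof. intros HU Hj. repeat split; simpl; auto. now apply cov_root. Qed.

Lemma parent_exists a X : anc a X -> exists P, parent P X.
Proof.
  intros Ha.
  destruct (nat_pred_has_max (fun i => exists A, anc (i, A) X) (fst X) (fst a))
    as [m [[P HP] Hm]].
  - intros i [A [_ [_ [Hi _]]]]. simpl in Hi. lia.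
  - exists (snd a). now destruct a.
  - exists (m, P). split; auto. intros [l A] HA. apply Hm. now exists A.
Qed.

Lemma coarse_ball_around i k x0 : (Z.of_nat i + 2 <= k)%Z -> exists y, Vs (vlev i) y /\
  forall z, d z x0 < 6 * powerRZ r k -> B (vlev i, y) z.
Proof.
  intros Hik. destruct (Vs_net (vlev i) ltac:(unfold vlev; lia) x0) as [y [Hy Hxy]].
  exists y; split; auto. intros z Hz. unfold Bv, oball, vlev in *; simpl.
  pose proof (six_powerRZ_le r r_pos (Z.of_nat i) k r_small Hik).
  pose proof (d_tri z x0 y). lra.
Qed.

Lemma ball_sub_coarse_ball k v i : Vs k v -> (Z.of_nat i + 1 <= k)%Z ->
  exists y, Vs (vlev i) y /\ subset (B (k, v)) (B (vlev i, y)).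
Proof.
  intros Hv Hik. destruct (Z.eq_dec (Z.of_nat i + 1) k) as [E|E].
  - exists v. unfold vlev. rewrite E. split; auto. intros x Hx; auto.
  - destruct (coarse_ball_around i k v ltac:(lia)) as [y [Hy Hb]]. exists y; split; auto.
    intros x Hx. apply Hb. unfold Bv, oball in Hx; simpl in Hx. pose proof (pw_pos k). lra.
Qed.

Lemma closure_ball_near k v z x : closure d (B (k, v)) z -> B (k, v) x ->
  d x z < 6 * powerRZ r k.
Proof.
  intros Hz Hx. unfold Bv, oball in Hx; simpl in Hx.
  assert (Hvz : d v z <= 2 * powerRZ r k).
  { apply Rnot_lt_le. intro Hlt.
    destruct (Hz (d v z - 2 * powerRZ r k) ltac:(lra)) as [a [Ha Hza]].
    unfold Bv, oball in Ha; simpl in Ha. pose proof (d_tri v a z).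
    rewrite (d_sym v a), (d_sym a z) in *. lra. }
  pose proof (d_tri x v z). pose proof (pw_pos k). lra.
Qed.

(* The parent of [U'] is either [U] itself or, swallowing [S] in its enlargement, a child of [U]. *)
Lemma near_of_ancestor j U j' U' (S : M -> Prop) s t :
  S s -> subset S U -> U' t ->
  (forall l A, cov l c A -> subset S A -> (l < j')%nat -> (l <= j)%nat) ->
  anc (j, U) (j', U') ->
  (forall i P, parent (i, P) (j', U') -> (j < i)%nat -> subset S (BU i P)) ->
  near (j, U) (j', U').
Proof.
  intros Ss SU U't S_top HUU' Hpar.
  destruct (parent_exists _ _ HUU') as [[i P] HP].
  pose proof HP as [[HPc [HU'c [Hij' HU'P]]] P_top]. simpl in *.
  pose proof (P_top _ HUU') as Hji. simpl in Hji.
  destruct HUU' as [HUc [_ [_ HU'U]]]. simpl in *.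
  destruct (Nat.eq_dec j i) as [<-|Hne].
  - assert (P = U) as -> by now apply (cov_eq_of_meet j P U t); auto.
    now apply within2_edge; left.
  - assert (SP : subset S (BU i P)) by (apply Hpar; auto; lia).
    apply (within2_edge2 _ _ (i, P)); left; auto. split.
    + apply (ancestor_of_meet j i U P s); auto; lia.
    + intros [l A] HlA. simpl. pose proof (ancestor_BU_sub _ _ _ _ HlA) as HPA.
      destruct HlA as [HAc [_ [Hli _]]]; simpl in *.
      apply (S_top l A); auto; [intros x Hx; apply HPA, SP, Hx | lia].
Qed.

Lemma near_of_BU_meet j U U' t : cov j c U -> cov j c U' -> (0 < j)%nat ->
  BU j U t -> BU j U' t -> near (j, U) (j, U').
Proof.
  intros HU HU' Hj HUt HU't.
  destruct (classic (U = U')) as [<-|Hne]; [apply within2_refl|].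
  destruct (parent_exists _ _ (root_ancestor j U' HU' Hj)) as [[i P] HPpar].
  pose proof HPpar as [HPU' P_top].
  assert (HPU : parent (i, P) (j, U)).
  { pose proof (ancestor_BU_sub _ _ _ _ HPU') as U'P.
    destruct HPU' as [HP [_ [Hi _]]]. simpl in *. split.
    - now apply (ancestor_of_meet i j P U t); auto.
    - intros [l A] HlA. apply (P_top (l, A)).
      pose proof (ancestor_BU_sub _ _ _ _ HlA) as UA.
      destruct HlA as [HA [_ [Hl _]]]; simpl in *.
      now apply (ancestor_of_meet l j A U' t); auto. }
  apply (within2_edge2 _ _ (i, P)); [right | left]; auto.
Qed.

Lemma fc_radial k v v' j U j' U' : Vs k v ->
  subset (B ((k + 1)%Z, v')) (B (k, v)) ->
  fc (k, v) (j, U) -> fc ((k + 1)%Z, v') (j', U') -> near (j, U) (j', U').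
Proof.
  intros Hv Hsub [_ Hf] [_ Hf'].
  destruct Hf' as [[E _]|[_ [HU' [HsU' [Hj' Hm']]]]]; simpl in *; [lia|].
  destruct Hf as [[E Ea]|[Hkk [HU [HsU [Hj Hm]]]]]; simpl in *.
  - injection Ea as -> ->. assert (j' = 0%nat) as -> by lia.
    apply cov_root in HU' as ->. apply within2_refl.
  - assert (Hv'U' : U' v') by apply HsU', center_in_ball.
    assert (Hv'U : U v') by apply HsU, Hsub, center_in_ball.
    assert (Hjj' : (j <= j')%nat).
    { apply (Hm' j U HU); [intros x Hx; apply HsU, Hsub, Hx | lia]. }
    destruct (Nat.eq_dec j j') as [<-|Hne].
    { rewrite (cov_eq_of_meet j U U' v') by auto. apply within2_refl. }
    apply (near_of_ancestor _ _ _ _ (B (k, v)) v v'); auto using center_in_ball.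
    + intros l A HA HSA Hl. apply (Hm l A HA HSA). lia.
    + apply (ancestor_of_meet j j' U U' v'); auto; [lia | now apply cov_sub_BU].
    + intros i P [[HP [_ [Hi HU'P]]] _] Hji. simpl in *.
      destruct (ball_sub_coarse_ball k v i Hv ltac:(lia)) as [y [Hy Hvy]].
      intros x Hx. apply (ball_sub_BU i P y v'); auto.
      now apply Hvy, Hsub, center_in_ball.
Qed.

Lemma fc_horizontal_far k v v' z j U j' U' :
  closure d (B (k, v)) z -> closure d (B (k, v')) z ->
  fc (k, v) (j, U) -> fc (k, v') (j', U') -> (j <= j')%nat -> (Z.of_nat j' + 2 <= k)%Z ->
  near (j, U) (j', U').
Proof.
  intros Hc Hc' [_ Hf] [_ Hf'] Hjj' Hfar.
  destruct Hf as [[E _]|[_ [HU [HsU [Hj Hm]]]]]; simpl in *; [lia|].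
  destruct Hf' as [[E _]|[_ [HU' [HsU' [Hj' Hm']]]]]; simpl in *; [lia|].
  destruct (coarse_ball_around j' k z Hfar) as [y [Hy Hb]].
  assert (Hv : subset (B (k, v)) (BU j' U')).
  { intros x Hx. apply (ball_sub_BU j' U' y v'); auto.
    - apply Hb, (closure_ball_near k v' z); auto using center_in_ball.
    - apply HsU', center_in_ball.
    - apply Hb, (closure_ball_near k v z); auto. }
  assert (HvU : U v) by apply HsU, center_in_ball.
  destruct (Nat.eq_dec j j') as [<-|Hne].
  { rewrite (cov_eq_of_BU_meet j U' U v) by auto using center_in_ball. apply within2_refl. }
  apply (near_of_ancestor _ _ _ _ (B (k, v)) v v'); auto using center_in_ball.
  - intros l A HA HSA Hl. apply (Hm l A HA HSA). lia.
  - apply (ancestor_of_meet j j' U U' v); auto using center_in_ball; lia.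
  - intros i P [HP _] Hji. exfalso.
    pose proof (ancestor_BU_sub _ _ _ _ HP) as HU'P.
    destruct HP as [HPc [_ [Hi _]]]; simpl in *.
    enough (i <= j)%nat by lia.
    apply (Hm i P HPc); [intros x Hx; apply HU'P, Hv, Hx | lia].
Qed.

(* Here [B(v)] and [B(v')] are both met by the ball of one [w] in [V_k] = [V_(j'+1)]. *)
Lemma fc_horizontal_near k v v' z j U j' U' :
  closure d (B (k, v)) z -> closure d (B (k, v')) z ->
  fc (k, v) (j, U) -> fc (k, v') (j', U') -> (j <= j')%nat -> (0 < j')%nat ->
  k = (Z.of_nat j' + 1)%Z -> near (j, U) (j', U').
Proof.
  intros Hc Hc' [_ Hf] [_ Hf'] Hjj' Hj'0 Hk.
  destruct Hf as [[E _]|[_ [HU [HsU [Hj Hm]]]]]; simpl in *; [lia|].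
  destruct Hf' as [[E _]|[_ [HU' [HsU' [Hj' Hm']]]]]; simpl in *; [lia|].
  destruct (Vs_net k ltac:(lia) z) as [w [Hw Hzw]].
  destruct (Hc (powerRZ r k) (pw_pos k)) as [a [Ha Hza]].
  destruct (Hc' (powerRZ r k) (pw_pos k)) as [a' [Ha' Hza']].
  assert (Hwa : B (k, w) a).
  { unfold Bv, oball; simpl. pose proof (d_tri a z w). rewrite (d_sym a z) in *. lra. }
  assert (Hwa' : B (k, w) a').
  { unfold Bv, oball; simpl. pose proof (d_tri a' z w). rewrite (d_sym a' z) in *. lra. }
  assert (Hvlev : vlev j' = k) by (unfold vlev; lia).
  assert (Hw' : subset (B (k, w)) (BU j' U')).
  { rewrite <- Hvlev in *. now apply (ball_sub_BU j' U' w a'); auto. }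
  destruct (Nat.eq_dec j j') as [<-|Hne].
  { apply (near_of_BU_meet j U U' a); auto. rewrite <- Hvlev in *.
    now apply (ball_sub_BU j U w a); auto. }
  apply (near_of_ancestor _ _ _ _ (B (k, v)) v v'); auto using center_in_ball.
  - intros l A HA HSA Hl. apply (Hm l A HA HSA). lia.
  - apply (ancestor_of_meet j j' U U' a); auto; lia.
  - intros i P [[HP [_ [Hi HU'P]]] _] Hji. simpl in *.
    destruct (coarse_ball_around i k z ltac:(lia)) as [y [Hy Hb]].
    intros x Hx. apply (ball_sub_BU i P y v'); auto.
    + apply Hb, (closure_ball_near k v' z); auto using center_in_ball.
    + apply HU'P, HsU', center_in_ball.
    + apply Hb, (closure_ball_near k v z); auto.
Qed.

Lemma fc_horizontal k v v' z j U j' U' :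
  closure d (B (k, v)) z -> closure d (B (k, v')) z ->
  fc (k, v) (j, U) -> fc (k, v') (j', U') -> (j <= j')%nat -> near (j, U) (j', U').
Proof.
  intros Hc Hc' Hf Hf' Hjj'. pose proof Hf as [_ Hf0]. pose proof Hf' as [_ Hf'0].
  destruct Hf0 as [[E Ea]|[Hkk [HU [_ [Hj _]]]]]; simpl in *;
  destruct Hf'0 as [[E' Ea']|[Hkk' [HU' [_ [Hj' _]]]]]; simpl in *; try lia.
  { rewrite Ea, Ea'. apply within2_refl. }
  destruct (Nat.eq_dec j' 0) as [->|Hj'0].
  { assert (j = 0%nat) as -> by lia.
    apply cov_root in HU as ->. apply cov_root in HU' as ->. apply within2_refl. }
  destruct (Z_le_gt_dec (Z.of_nat j' + 2) k).
  - now apply (fc_horizontal_far k v v' z).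
  - apply (fc_horizontal_near k v v' z); auto; lia.
Qed.

Lemma fc_exists p : xvertex k0 Vs p -> exists a, fc p a.
Proof.
  destruct p as [k v]. intros Hx. pose proof Hx as [Hk Hv]; simpl in *.
  destruct (Z.eq_dec k k0) as [->|Hne].
  { exists (0%nat, fun _ => True). split; auto. }
  destruct (nat_pred_has_max (fun i => exists A, cov i c A /\ subset (B (k, v)) A /\
      (Z.of_nat i <= Z.max (k - 1) 0)%Z) (Z.to_nat (Z.max (k - 1) 0)) 0)
    as [m [[A [HA [HsA HmA]]] Hm]].
  - intros i [A [_ [_ Hi]]]. lia.
  - exists (fun _ => True). repeat split; [now apply cov_root | lia].
  - exists (m, A). split; auto. right; simpl. repeat split; auto; [lia|].
    intros j U HU Hs Hj. apply Hm. now exists U.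
Qed.

Lemma fc_unique p a b : fc p a -> fc p b -> a = b.
Proof.
  destruct p as [k v], a as [j U], b as [j' U']. intros [_ Hf] [_ Hf'].
  destruct Hf as [[E Ea]|[Hkk [HU [HsU [Hj Hm]]]]]; simpl in *;
  destruct Hf' as [[E' Ea']|[Hkk' [HU' [HsU' [Hj' Hm']]]]]; simpl in *; try lia.
  - now rewrite Ea, Ea'.
  - assert (j = j') as <- by (pose proof (Hm' j U); pose proof (Hm j' U'); intuition lia).
    f_equal. apply (cov_eq_of_meet j U U' v); auto; [apply HsU | apply HsU'];
    apply center_in_ball.
Qed.

Lemma fc_edge p q a b : xedge d r k0 Vs p q -> fc p a -> fc q b -> near a b.
Proof.
  intros [[_ Hv] [[_ Hv'] H]]. destruct p as [k v], q as [k' v'], a as [j U], b as [j' U'].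
  simpl in *. intros Ha Hb.
  destruct H as [[-> [_ [z [Hz Hz']]]] | [[-> Hs] | [-> Hs]]].
  - destruct (le_lt_dec j j').
    + now apply (fc_horizontal k' v v' z).
    + apply within2_sym; [apply tedge_sym|]. apply (fc_horizontal k' v' v z); auto; lia.
  - now apply (fc_radial k v v').
  - apply within2_sym; [apply tedge_sym|]. now apply (fc_radial k' v' v).
Qed.

Lemma fc_walk n p q a b : walk (xedge d r k0 Vs) n p q -> fc p a -> fc q b ->
  exists l, (l <= 2 * n)%nat /\ walk (tedge cov c) l a b.
Proof.
  intros Hw. revert a b. induction Hw as [p|n p w q Hpw _ IH]; intros a b Ha Hb.
  - rewrite (fc_unique p a b) by auto. exists 0%nat; split; [lia | constructor].
  - destruct (fc_exists w) as [aw Haw]; [now destruct Hpw as [_ [Hw _]]|].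
    destruct (fc_edge p w a aw Hpw Ha Haw) as [l1 [Hl1 W1]].
    destruct (IH aw b Haw Hb) as [l2 [Hl2 W2]].
    exists (l1 + l2)%nat; split; [lia | now apply (walk_cat _ _ _ _ aw)].
Qed.

End ColoredTree.

Theorem lemma6p2 (M : Type) (d : M -> M -> R) (Dm r : R) (k0 : Z)
  (Vs : Z -> M -> Prop) (n : nat) (C : Type) (Cl : list C)
  (cov : nat -> C -> (M -> Prop) -> Prop) :
  is_metric d -> (exists x y : M, x <> y) -> is_diam d Dm ->
  hyp_approx d Dm r k0 Vs ->
  cdim_eq d n ->
  NoDup Cl -> (forall c, In c Cl) -> length Cl = S n ->
  r < Rmin Dm (/ Dm) ->
  colored_cov d r Vs cov ->
  forall (c : C) (p q : Z * M) (a b : nat * (M -> Prop)) (m m' : nat),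
    fc_rel d r k0 Vs cov c p a -> fc_rel d r k0 Vs cov c q b ->
    path_dist (xedge d r k0 Vs) p q m ->
    path_dist (tedge cov c) a b m' ->
    (m' <= 2 * m)%nat.
Proof.
  intros [_ [d_eq0 [d_sym d_tri]]] _ _ Happrox _ _ _ _ r_lt
    [_ [_ [cov_disj [cov_root [_ [_ cov_nested]]]]]] c p q a b m m' Ha Hb [Hw _] [_ Hmin].
  pose proof Happrox as [r_pos [r_small [_ [_ V_sep]]]].
  assert (d_refl : forall x, d x x = 0) by (intro x; now apply d_eq0).
  assert (k0_nonpos : (k0 <= 0)%Z).
  { apply (hyp_approx_k0_nonpos d Dm r k0 Vs Happrox).
    pose proof (Rmin_l Dm (/ Dm)). lra. }
  assert (Vs_net : forall k, (0 <= k)%Z -> forall z, exists y, Vs k y /\ d z y < powerRZ r k).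
  { intros k Hk. apply max_separated_net; auto using powerRZ_lt.
    apply V_sep. lia. }
  destruct (fc_walk M d r k0 Vs C cov c d_refl d_sym d_tri r_pos r_small k0_nonpos Vs_net
      (fun j => cov_disj j c) (cov_root c) (cov_nested c) m p q a b Hw Ha Hb) as [l [Hl Wl]].
  specialize (Hmin l Wl). lia.
Qed.
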